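(* Let $X$ be an infinite domain, let $H$ be a countable collection of hypotheses $h:X\to\{0,1\}$, and let $\varepsilon\ge0$. Then for no $n\in\mathbb{N}$ is there an $\varepsilon$-differentially private $(1/3,1/3)$-accurate PAC learner for the point functions over $X$ using the hypothesis class $H$ with sample complexity $n$.
   Context: Point functions over $X$: $\{c_x:x\in X\}$ with $c_x(y)=1$ iff $y=x$. An $(\alpha,\beta)$-accurate PAC learner for a concept class $C$ using hypothesis class $H$ with sample complexity $n$ is an algorithm $L:(X\times\{0,1\})^n\to H$ such that for every $c\in C$ and every distribution $\mathcal{D}$ on $X$, given $(x_i,c(x_i))_{i=1}^n$ with $x_i$ i.i.d. from $\mathcal{D}$, it outputs $h\in H$ with $\Pr[\Pr_{x\sim\mathcal{D}}[h(x)\ne c(x)]\le\alpha]\ge1-\beta$. $\varepsilon$-differential privacy: for all $D,D'\in(X\times\{0,1\})^n$ differing in one row and all $T\subseteq H$, $\Pr[L(D)\in T]\le e^\varepsilon\Pr[L(D')\in T]$. *)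

From mathcomp Require Import all_boot all_order all_algebra.
From mathcomp Require Import all_classical all_reals all_analysis.
Set Implicit Arguments. Unset Strict Implicit. Unset Printing Implicit Defensive.
Import Order.TTheory GRing.Theory Num.Theory.
Local Open Scope classical_set_scope.
Local Open Scope ring_scope.

Section PAC.
Variables (R : realType) (X : choiceType).

Definition point_fun (x : X) : X -> bool := fun y => y == x.

Definition point_functions : set (X -> bool) := [set c | exists x, c = point_fun x].

Definition neighbors n (S S' : n.-tuple (X * bool)) :=
  exists i : 'I_n, forall j : 'I_n, j != i -> tnth S j = tnth S' j.

(* A randomized learner with hypothesis class H: on each dataset it outputs a
   probability distribution over H (H is countable, so a distribution on H is
   given by a probability mass function on H). *)
Definition learner_with_hyp (H : set (X -> bool)) n
    (L : n.-tuple (X * bool) -> (X -> bool) -> R) :=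
  forall S, (forall h, 0 <= L S h) /\ (forall h, ~ H h -> L S h = 0) /\
            (\esum_(h in H) (L S h)%:E = 1)%E.

Definition out_prob n (L : n.-tuple (X * bool) -> (X -> bool) -> R)
    (S : n.-tuple (X * bool)) (T : set (X -> bool)) : \bar R :=
  \esum_(h in T) (L S h)%:E.

Definition diff_private (eps : R) (H : set (X -> bool)) n
    (L : n.-tuple (X * bool) -> (X -> bool) -> R) :=
  forall S S', neighbors S S' -> forall T, T `<=` H ->
    (out_prob L S T <= (expR eps)%:E * out_prob L S' T)%E.

(* A (finitely supported) distribution on X: points pt i with weights w i. *)
Definition is_dist k (w : 'I_k -> R) :=
  (forall i, 0 <= w i) /\ \sum_(i < k) w i = 1.

Definition dist_err k (pt : 'I_k -> X) (w : 'I_k -> R) (c h : X -> bool) : R :=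
  \sum_(i < k) w i * (h (pt i) != c (pt i))%:R.

Definition labelled_sample n k (pt : 'I_k -> X) (c : X -> bool)
    (f : {ffun 'I_n -> 'I_k}) : n.-tuple (X * bool) :=
  [tuple (pt (f i), c (pt (f i))) | i < n].

(* Pr_{S ~ D^n, h ~ L(S)} [ error_D(h) <= alpha ] *)
Definition success_prob n (L : n.-tuple (X * bool) -> (X -> bool) -> R)
    (H : set (X -> bool)) k (pt : 'I_k -> X) (w : 'I_k -> R)
    (c : X -> bool) (alpha : R) : \bar R :=
  (\sum_(f : {ffun 'I_n -> 'I_k})
     (\prod_(i < n) w (f i))%:E *
       out_prob L (labelled_sample pt c f)
                [set h | H h /\ (dist_err pt w c h <= alpha)%R])%E.

Definition pac_learner (C H : set (X -> bool)) n
    (L : n.-tuple (X * bool) -> (X -> bool) -> R) (alpha beta : R) :=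
  learner_with_hyp H L /\
  forall c, C c -> forall k (pt : 'I_k -> X) (w : 'I_k -> R), is_dist w ->
    ((1 - beta)%:E <= success_prob L H pt w c alpha)%E.

End PAC.

(** Chaining the privacy guarantee along the [n] neighbouring datasets that
    interpolate between any dataset [S] and a fixed dataset [S0] shows that
    every event has probability at most [e^(n eps)] times its probability under
    [L(S0)].  The output distribution of [L(S0)] puts all but [1/(3 e^(n eps))]
    of its mass on a finite set [F] of hypotheses, and since [X] is infinite
    two distinct points [x], [y] are labelled alike by every member of [F].
    Under the uniform distribution on [{x, y}] with target [c_x], a hypothesis
    of error at most [1/3] must separate [x] from [y], hence lies outside [F];
    so the learner succeeds with probability at most [1/3] on every sample. *)
From mathcomp Require Import all_boot all_order all_algebra.
From mathcomp Require Import all_classical all_reals all_analysis.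
From mathcomp Require Import finmap lra.
Set Implicit Arguments. Unset Strict Implicit. Unset Printing Implicit Defensive.
Import Order.TTheory GRing.Theory Num.Theory.
Local Open Scope classical_set_scope.
Local Open Scope ring_scope.

Section Hybrid.
Variables (T : Type) (n : nat).

Definition hybrid (S S0 : n.-tuple T) (j : nat) : n.-tuple T :=
  [tuple if (i < j)%N then tnth S0 i else tnth S i | i < n].

Lemma hybrid0 S S0 : hybrid S S0 0 = S.
Proof. by apply: eq_from_tnth => i; rewrite tnth_mktuple. Qed.

Lemma hybridn S S0 : hybrid S S0 n = S0.
Proof. by apply: eq_from_tnth => i; rewrite tnth_mktuple ltn_ord. Qed.

Lemma hybridS_tnth S S0 j (k : 'I_n) : (k : nat) != j ->
  tnth (hybrid S S0 j) k = tnth (hybrid S S0 j.+1) k.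
Proof. by move=> kj; rewrite !tnth_mktuple ltnS ltn_neqAle kj. Qed.

End Hybrid.

Section Privacy.
Variables (R : realType) (X : choiceType).

Lemma neighbors_hybridS n (S S0 : n.-tuple (X * bool)) j (jn : (j < n)%N) :
  neighbors (hybrid S S0 j) (hybrid S S0 j.+1).
Proof.
exists (Ordinal jn) => k kj; apply: hybridS_tnth.
by apply: contra kj => /eqP kj; apply/eqP/val_inj.
Qed.

Lemma group_privacy (eps : R) (H : set (X -> bool)) n
    (L : n.-tuple (X * bool) -> (X -> bool) -> R) :
  diff_private eps H L -> forall S S0 T, T `<=` H ->
  (out_prob L S T <= (expR eps ^+ n)%:E * out_prob L S0 T)%E.
Proof.
move=> DP S S0 T TH; rewrite -(hybridn S S0).
suff: forall j, (j <= n)%N ->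
    (out_prob L S T <= (expR eps ^+ j)%:E * out_prob L (hybrid S S0 j) T)%E.
  exact.
elim=> [_|j IH jn]; first by rewrite expr0 mul1e hybrid0.
apply: (le_trans (IH (ltnW jn))).
rewrite exprSr EFinM -muleA lee_wpmul2l ?lee_fin ?exprn_ge0 ?expR_ge0 //.
exact/DP/TH/neighbors_hybridS.
Qed.

End Privacy.

Lemma le_esum_subset (R : realType) (T : choiceType) (A B : set T)
    (a : T -> \bar R) :
  A `<=` B -> (forall t, B t -> (0 <= a t)%E) ->
  (\esum_(t in A) a t <= \esum_(t in B) a t)%E.
Proof.
move=> AB a_ge0; rewrite -(setIidr AB) esum_mkcondr.
by apply: le_esum => t Bt; case: ifPn => // _; exact: a_ge0.
Qed.

Lemma esum_finite_concentration (R : realType) (T : choiceType) (H : set T)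
    (P : T -> R) (P_ge0 : forall h, 0 <= P h)
    (P_sum : (\esum_(h in H) (P h)%:E = 1)%E) (d : R) (d_gt0 : 0 < d) :
  exists F, [/\ finite_set F, F `<=` H &
    forall A, A `<=` H `&` ~` F -> (\esum_(h in A) (P h)%:E <= d%:E)%E].
Proof.
have : ((1 - d)%:E < \esum_(h in H) (P h)%:E)%E by rewrite P_sum lte_fin; lra.
case/ereal_sup_gt => _ [F [finF FH] <-] F_gt.
exists F; split => // A AHF.
have P_ge0E h (_ : H h) : (0 <= (P h)%:E)%E by rewrite lee_fin.
have split_F := esumID F H (fun h => (P h)%:E) P_ge0E.
rewrite P_sum (setIidr FH) esum_fset // ?fsumEFin // in split_F;
  last by move=> h _; rewrite lee_fin.
rewrite fsumEFin // lte_fin in F_gt.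
apply: le_trans (le_esum_subset AHF (fun h Hh => P_ge0E h Hh.1)) _.
move: split_F; case: (\esum_(h in H `&` ~` F) (P h)%:E) => [r||] //= /eqP.
by rewrite -EFinD eqe lee_fin => /eqP; lra.
Qed.

Lemma finite_family_unseparated (X : choiceType) (Y : finType)
    (F : set (X -> Y)) :
  infinite_set [set: X] -> finite_set F ->
  exists x y : X, x != y /\ forall h, F h -> h x = h y.
Proof.
move=> Xinf finF; pose G := fset_set F.
have [B _ B_card] := infinite_set_fset (#|Y| ^ #|` G|).+1 Xinf.
apply: contrapT => not_ex.
pose trace (b : B) : {ffun G -> Y} := [ffun h => val h (val b)].
have trace_inj : injective trace.
  move=> a b tr_ab; apply/val_inj/eqP; apply: contrapT => ab.
  apply: not_ex; exists (val a), (val b); split; first exact/negP.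
  move=> h Fh; have hG : h \in G by rewrite in_fset_set //; exact/mem_set.
  by have := congr1 (fun f : {ffun G -> Y} => f (FSetSub hG)) tr_ab; rewrite !ffunE.
have := @leq_card _ _ trace trace_inj; rewrite card_ffun -!cardfE.
by rewrite leqNgt B_card.
Qed.

Section Learning.
Variables (R : realType) (X : choiceType).

Lemma sum_prod_dist n k (w : 'I_k -> R) : is_dist w ->
  \sum_(f : {ffun 'I_n -> 'I_k}) \prod_(i < n) w (f i) = 1.
Proof.
case=> _ w_sum; rewrite -(bigA_distr_bigA (fun (_ : 'I_n) (j : 'I_k) => w j)).
by rewrite w_sum prodr_const expr1n.
Qed.

Lemma success_prob_le n (L : n.-tuple (X * bool) -> (X -> bool) -> R)
    (H : set (X -> bool)) k (pt : 'I_k -> X) (w : 'I_k -> R)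
    (c : X -> bool) (alpha b : R) : is_dist w ->
  (forall S, out_prob L S [set h | H h /\ (dist_err pt w c h <= alpha)%R] <= b%:E)%E ->
  (success_prob L H pt w c alpha <= b%:E)%E.
Proof.
move=> w_dist out_le.
apply: (@le_trans _ _ (\sum_(f : {ffun 'I_n -> 'I_k})
                        ((\prod_(i < n) w (f i)) * b)%:E)%E).
  apply: lee_sum => f _; rewrite EFinM lee_wpmul2l ?lee_fin //.
  by apply: prodr_ge0 => i _; case: w_dist.
by rewrite sumEFin -mulr_suml sum_prod_dist // mul1r.
Qed.

Definition pair_pt (x y : X) : 'I_2 -> X := fun i => if i == ord0 then x else y.

Definition uniform2 : 'I_2 -> R := fun _ => 1 / 2.

Lemma is_dist_uniform2 : is_dist uniform2.
Proof.
split=> [i|]; first by rewrite /uniform2; lra.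
by rewrite big_ord_recr big_ord1 /uniform2 /=; lra.
Qed.

Lemma dist_err_pair_separates (x y : X) (h : X -> bool) : x != y ->
  dist_err (pair_pt x y) uniform2 (point_fun x) h <= 1 / 3 -> h x != h y.
Proof.
rewrite /dist_err big_ord_recr big_ord1 /pair_pt /uniform2 /point_fun /= eqxx.
rewrite eq_sym => /negbTE ->.
by case: (h x); case: (h y) => //= err; exfalso; lra.
Qed.

End Learning.

Theorem theorem7p2 (R : realType) (X : choiceType)
  (Xinf : infinite_set [set: X])
  (H : set (X -> bool)) (Hcount : countable H)
  (eps : R) (eps_ge0 : 0 <= eps) :
  forall (n : nat) (L : n.-tuple (X * bool) -> (X -> bool) -> R),
    ~ (diff_private eps H L /\
       pac_learner (@point_functions X) H L (1 / 3) (1 / 3)).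
Proof.
move=> n L [DP [LH PAC]].
have [x0 _] := infinite_setN0 Xinf.
pose S0 : n.-tuple (X * bool) := [tuple (x0, true) | _ < n].
pose c := expR eps ^+ n.
have c_gt0 : 0 < c by rewrite exprn_gt0 // expR_gt0.
have [L0_ge0 [_ L0_sum]] := LH S0.
have d_gt0 : 0 < (3 * c)^-1 by rewrite invr_gt0 mulr_gt0.
have [F [finF _ F_tail]] := esum_finite_concentration L0_ge0 L0_sum d_gt0.
have [x [y [xy Fxy]]] := finite_family_unseparated Xinf finF.
pose Good :=
  [set h | H h /\ dist_err (pair_pt x y) (uniform2 R) (point_fun x) h <= 1 / 3].
have Good_avoids_F : Good `<=` H `&` ~` F.
  move=> h [Hh h_err]; split=> // Fh.
  by move: (dist_err_pair_separates xy h_err); rewrite Fxy ?eqxx.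
have success_small : (success_prob L H (pair_pt x y) (uniform2 R) (point_fun x)
                        (1 / 3) <= (c * (3 * c)^-1)%:E)%E.
  apply: success_prob_le; first exact: is_dist_uniform2.
  move=> S; apply: le_trans (group_privacy DP S S0 (fun h => @proj1 _ _)) _.
  rewrite EFinM; apply: lee_wpmul2l; first by rewrite lee_fin ltW.
  exact: F_tail Good_avoids_F.
have := le_trans (PAC _ (ex_intro _ x erefl) _ _ _ (is_dist_uniform2 R))
                 success_small.
have -> : c / (3 * c) = 1 / 3 by rewrite invfM mulrCA mulfV ?gt_eqF // mulr1 div1r.
by rewrite lee_fin => le; lra.
Qed.
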